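(* If $g(n)$ is bounded by a constant, then the smallest constant $C$ with $g(n)\le C$ for all $n$ satisfies $C\le 4$; the same holds for $h(n)$. Consequently, if $f(n)$ is bounded by a constant, then the smallest such constant is at most $16$.
   Context: For a digraph $D$, $\chi(D)$ is the chromatic number of its underlying graph; $D^{-1}$ is $D$ with arcs reversed; $D_1\times D_2$ has vertex set $V(D_1)\times V(D_2)$ and arc $(x,y)\to(x',y')$ iff $(x,x')$ is an arc of $D_1$ and $(y,y')$ an arc of $D_2$ (graph product $G\times H$ analogously with edges). $f(n)=\min\{\chi(G\times H):\chi(G),\chi(H)\ge n\}$ over graphs; $g(n)=\min\{\chi(D_1\times D_2):\chi(D_1),\chi(D_2)\ge n\}$ and $h(n)=\min\{\max\{\chi(D_1\times D_2),\chi(D_1\times D_2^{-1})\}:\chi(D_1),\chi(D_2)\ge n\}$ over digraphs (digons allowed). *)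

From mathcomp Require Import all_boot.
Set Implicit Arguments. Unset Strict Implicit. Unset Printing Implicit Defensive.

Definition ucolorable (T : finType) (e : rel T) (k : nat) : bool :=
  [exists c : {ffun T -> 'I_k},
     [forall x, forall y, (e x y || e y x) ==> (c x != c y)]].

Lemma ucolorable_card (T : finType) (e : rel T) :
  irreflexive e -> ucolorable e #|T|.
Proof.
move=> irr; apply/existsP; exists [ffun x => enum_rank x].
apply/forallP=> x; apply/forallP=> y; apply/implyP=> exy.
rewrite !ffunE; apply/negP=> /eqP /enum_rank_inj exy'.
by move: exy; rewrite exy' orbb irr.
Qed.

Definition uchi (T : finType) (e : rel T) (irr : irreflexive e) : nat :=
  ex_minn (ex_intro (fun k => ucolorable e k) _ (ucolorable_card irr)).

(* Finite loopless digraphs (digons allowed). *)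
Record digraph := Digraph {
  dvert : finType;
  darc : rel dvert;
  darc_irr : irreflexive darc }.

Record graph := Graph {
  gvert : finType;
  gadj : rel gvert;
  gadj_irr : irreflexive gadj;
  gadj_sym : symmetric gadj }.

Definition dchi (D : digraph) : nat := uchi (@darc_irr D).
Definition gchi (G : graph) : nat := uchi (@gadj_irr G).

Definition prod_rel (T1 T2 : finType) (e1 : rel T1) (e2 : rel T2) :
  rel (T1 * T2)%type := fun u v => e1 u.1 v.1 && e2 u.2 v.2.

Lemma prod_rel_irr (T1 T2 : finType) (e1 : rel T1) (e2 : rel T2) :
  irreflexive e1 -> irreflexive (prod_rel e1 e2).
Proof. by move=> h u; rewrite /prod_rel h. Qed.

Lemma prod_rel_sym (T1 T2 : finType) (e1 : rel T1) (e2 : rel T2) :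
  symmetric e1 -> symmetric e2 -> symmetric (prod_rel e1 e2).
Proof. by move=> h1 h2 u v; rewrite /prod_rel h1 h2. Qed.

Definition dprod (D1 D2 : digraph) : digraph :=
  @Digraph (dvert D1 * dvert D2)%type (prod_rel (@darc D1) (@darc D2))
    (prod_rel_irr (@darc D2) (@darc_irr D1)).

Lemma rev_irr (T : finType) (e : rel T) :
  irreflexive e -> irreflexive (fun x y => e y x).
Proof. by []. Qed.
Definition drev (D : digraph) : digraph :=
  @Digraph (dvert D) (fun x y => darc y x) (rev_irr (@darc_irr D)).

Definition gprod (G H : graph) : graph :=
  @Graph (gvert G * gvert H)%type (prod_rel (@gadj G) (@gadj H))
    (prod_rel_irr (@gadj H) (@gadj_irr G))
    (prod_rel_sym (@gadj_sym G) (@gadj_sym H)).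

(* "f(n) <= C", "g(n) <= C", "h(n) <= C": the minimum over the (nonempty)
   class is <= C iff some member of the class has value <= C. *)
Definition f_le (n C : nat) : Prop :=
  exists G H : graph, n <= gchi G /\ n <= gchi H /\ gchi (gprod G H) <= C.
Definition g_le (n C : nat) : Prop :=
  exists D1 D2 : digraph, n <= dchi D1 /\ n <= dchi D2 /\
    dchi (dprod D1 D2) <= C.
Definition h_le (n C : nat) : Prop :=
  exists D1 D2 : digraph, n <= dchi D1 /\ n <= dchi D2 /\
    maxn (dchi (dprod D1 D2)) (dchi (dprod D1 (drev D2))) <= C.

From mathcomp Require Import all_boot zify.

(* Let [arcD D] be the arc digraph of D (vertices the arcs, [uv -> vw]).
   Colouring a vertex by the set of colours of its entering arcs shows
   chi(D) <= 2 ^ chi(arcD D), while chi(D) <= C(k, 2) implies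
   chi(arcD D) <= k.  Since [arcD D1 x arcD D2] maps homomorphically into
   [arcD (D1 x D2)] (and likewise with D2 reversed), if g(n) <= C + 1 for all
   n with C >= 4, then applying this to witnesses for 2 ^ n gives g(n) <= C,
   because C + 1 <= C(C, 2); descending to 4 settles g and h.  Finally a graph
   is a symmetric digraph, so f <= h, and the underlying graph of
   D1 x D2 is covered by D1 x D2 and D1 x D2^-1, so f <= h * h <= 16. *)

Set Implicit Arguments. Unset Strict Implicit. Unset Printing Implicit Defensive.

Lemma ucolorableP (T : finType) (e : rel T) k :
  reflect (exists c : T -> 'I_k, forall x y, e x y -> c x != c y)
          (ucolorable e k).
Proof.
apply: (iffP existsP) => [[c /forallP Hc] | [c Hc]].
  exists c => x y exy; have /implyP := forallP (Hc x) y; apply.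
  by rewrite exy.
exists [ffun x => c x]; apply/forallP=> x; apply/forallP=> y.
by apply/implyP; rewrite !ffunE => /orP[/Hc // | /Hc]; rewrite eq_sym.
Qed.

Lemma ucolorable_fin (T K : finType) (e : rel T) (c : T -> K) :
  (forall x y, e x y -> c x != c y) -> ucolorable e #|K|.
Proof.
move=> Hc; apply/ucolorableP; exists (fun x => enum_rank (c x)) => x y exy.
by rewrite (inj_eq enum_rank_inj) Hc.
Qed.

Lemma ucolorable_widen (T : finType) (e : rel T) k k' :
  k <= k' -> ucolorable e k -> ucolorable e k'.
Proof.
move=> le_kk' /ucolorableP[c Hc]; rewrite -[k']card_ord.
by apply: (ucolorable_fin (c := fun x => widen_ord le_kk' (c x))) => x y /Hc.
Qed.

Lemma ucolorable_comap (T T' : finType) (e : rel T) (e' : rel T') (f : T -> T') k :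
  (forall x y, e x y -> e' (f x) (f y) || e' (f y) (f x)) ->
  ucolorable e' k -> ucolorable e k.
Proof.
move=> hom /ucolorableP[c Hc]; apply/ucolorableP; exists (c \o f) => x y.
by move=> /hom /orP[/Hc // | /Hc]; rewrite eq_sym.
Qed.

Lemma ucolorable_mul (T : finType) (e e1 e2 : rel T) k1 k2 :
  (forall x y, e x y -> [|| e1 x y, e1 y x, e2 x y | e2 y x]) ->
  ucolorable e1 k1 -> ucolorable e2 k2 -> ucolorable e (k1 * k2).
Proof.
move=> cover /ucolorableP[c1 Hc1] /ucolorableP[c2 Hc2].
rewrite -[k1]card_ord -[k2]card_ord -card_prod.
apply: (ucolorable_fin (c := fun x => (c1 x, c2 x))) => x y exy.
rewrite xpair_eqE negb_and.
case/or4P: (cover x y exy) => [/Hc1 | /Hc1 | /Hc2 | /Hc2];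
  by rewrite 1?[_ == _]eq_sym => ->; rewrite ?orbT.
Qed.

Lemma uchi_leq (T : finType) (e : rel T) (irr : irreflexive e) k :
  (uchi irr <= k) = ucolorable e k.
Proof.
rewrite /uchi; case: ex_minnP => m col_m min_m.
by apply/idP/idP => [/ucolorable_widen -> | /min_m].
Qed.

Lemma uchi_comap (T T' : finType) (e : rel T) (e' : rel T')
    (irr : irreflexive e) (irr' : irreflexive e') (f : T -> T') :
  (forall x y, e x y -> e' (f x) (f y) || e' (f y) (f x)) ->
  uchi irr <= uchi irr'.
Proof.
by move=> hom; rewrite uchi_leq (ucolorable_comap hom) // -(uchi_leq irr').
Qed.

Lemma dchi_leq (D : digraph) k : (dchi D <= k) = ucolorable (@darc D) k.
Proof. exact: uchi_leq. Qed.

Lemma dchi_hom (D D' : digraph) (f : dvert D -> dvert D') :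
  (forall x y, darc x y -> darc (f x) (f y)) -> dchi D <= dchi D'.
Proof. by move=> hom; apply: (@uchi_comap _ _ _ _ _ _ f) => x y /hom ->. Qed.

Lemma dchi_ucolorable (D : digraph) : ucolorable (@darc D) (dchi D).
Proof. by rewrite -dchi_leq. Qed.

Definition arc (D : digraph) : finType :=
  {uv : (dvert D * dvert D)%type | darc uv.1 uv.2}.

Definition arc_rel (D : digraph) : rel (arc D) :=
  fun a b => (val a).2 == (val b).1.

Lemma arc_rel_irr (D : digraph) : irreflexive (@arc_rel D).
Proof.
move=> [[u v] /= uv]; rewrite /arc_rel /=.
by apply: contraTF uv => /eqP ->; rewrite darc_irr.
Qed.

Definition arcD (D : digraph) : digraph :=
  @Digraph (arc D) (@arc_rel D) (@arc_rel_irr D).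

Lemma ucolorable_exp_arcD (D : digraph) k :
  ucolorable (@darc (arcD D)) k -> ucolorable (@darc D) (2 ^ k).
Proof.
move=> /ucolorableP[c Hc].
pose into (v : dvert D) := [set c a | a : arc D & (val a).2 == v].
have card_sets : #|{set 'I_k}| = 2 ^ k.
  by rewrite -cardsT -powersetT card_powerset cardsT card_ord.
rewrite -card_sets.
apply: (ucolorable_fin (c := into)) => u v uv.
pose a : arc D := exist _ (u, v) uv.
have ca_v : c a \in into v by apply/imsetP; exists a; rewrite ?inE.
have ca_u : c a \notin into u.
  apply/imsetP => -[b]; rewrite inE => /eqP bu /eqP.
  by apply/negP; rewrite eq_sym Hc // /= /arc_rel bu.
by apply: contraNneq ca_u => ->.
Qed.

Lemma dchi_le_exp_arcD (D : digraph) : dchi D <= 2 ^ dchi (arcD D).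
Proof. by rewrite dchi_leq ucolorable_exp_arcD ?dchi_ucolorable. Qed.

(* Given an antichain [A] of subsets of ['I_k] indexed by the colours of [D],
   colour the arc [uv] by a point of [A (c u) :\: A (c v)]: the colour of an
   arc leaving [v] lies in [A (c v)], that of an arc entering [v] does not. *)
Lemma ucolorable_arcD (D : digraph) m k (A : 'I_m -> {set 'I_k.+1}) :
  (forall i j, i != j -> ~~ (A i \subset A j)) ->
  ucolorable (@darc D) m -> ucolorable (@darc (arcD D)) k.+1.
Proof.
move=> antichain /ucolorableP[c Hc].
pose col (a : arc D) := odflt ord0 [pick x in A (c (val a).1) :\: A (c (val a).2)].
have colP (a : arc D) : col a \in A (c (val a).1) :\: A (c (val a).2).
  rewrite /col; case: pickP => [x -> // | none].
  have /antichain := Hc _ _ (valP a); rewrite -setD_eq0 => /set0Pn[x].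
  by rewrite none.
apply/ucolorableP; exists col => a b /eqP ab.
have /setDP[_ col_a] := colP a; have /setDP[col_b _] := colP b.
by apply: contraNneq col_a => ->; rewrite ab.
Qed.

Lemma two_subsets_antichain k :
  exists A : 'I_'C(k, 2) -> {set 'I_k},
    forall i j, i != j -> ~~ (A i \subset A j).
Proof.
have card_pairs : #|[set X : {set 'I_k} | #|X| == 2]| = 'C(k, 2).
  by rewrite card_draws card_ord.
exists (fun i => enum_val (cast_ord (esym card_pairs) i)) => i j.
set X := enum_val _; set Y := enum_val _.
have /[!inE] /eqP cardX : X \in [set X : {set 'I_k} | #|X| == 2] by apply: enum_valP.
have /[!inE] /eqP cardY : Y \in [set X : {set 'I_k} | #|X| == 2] by apply: enum_valP.
apply: contra => sXY; have /enum_val_inj /(congr1 val) /= /val_inj -> // : X = Y.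
by apply/eqP; rewrite eqEcard sXY cardX cardY.
Qed.

Lemma dchi_arcD_le (D : digraph) k :
  0 < k -> dchi D <= 'C(k, 2) -> dchi (arcD D) <= k.
Proof.
case: k => // k _; rewrite !dchi_leq.
by have [A antichain] := two_subsets_antichain k.+1; apply: ucolorable_arcD antichain.
Qed.

Lemma ltn_bin2 n : 4 <= n -> n < 'C(n, 2).
Proof. by rewrite bin2 -divn2; case: n => //= n; nia. Qed.

Lemma dchi_arcD_shrink (D : digraph) C :
  4 <= C -> dchi D <= C.+1 -> dchi (arcD D) <= C.
Proof.
move=> C4 le_DC; apply: dchi_arcD_le; first exact: leq_trans C4.
exact: leq_trans le_DC (ltn_bin2 C4).
Qed.

Lemma exp_le_dchi_arcD (D : digraph) n : 2 ^ n <= dchi D -> n <= dchi (arcD D).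
Proof.
by move=> le_nD; rewrite -(@leq_exp2l 2) // (leq_trans le_nD) ?dchi_le_exp_arcD.
Qed.

Definition arc_pair (D1 D2 : digraph) (p : arc D1 * arc D2) :
  arc (dprod D1 D2) :=
  exist _ (((val p.1).1, (val p.2).1), ((val p.1).2, (val p.2).2))
    (introT andP (conj (valP p.1) (valP p.2))).

Definition arc_pair_rev (D1 D2 : digraph) (p : arc D1 * arc D2) :
  arc (dprod D1 (drev D2)) :=
  exist _ (((val p.1).1, (val p.2).2), ((val p.1).2, (val p.2).1))
    (introT andP (conj (valP p.1) (valP p.2))).

Lemma dchi_dprod_arcD (D1 D2 : digraph) :
  dchi (dprod (arcD D1) (arcD D2)) <= dchi (arcD (dprod D1 D2)).
Proof.
apply: (@dchi_hom (dprod (arcD D1) (arcD D2)) (arcD (dprod D1 D2)) (@arc_pair D1 D2)).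
move=> -[a b] [a' b'] /andP[/eqP /= aa' /eqP /= bb'].
by rewrite /= /arc_rel /= aa' bb'.
Qed.

Lemma dchi_dprod_rev_arcD (D1 D2 : digraph) :
  dchi (dprod (arcD D1) (drev (arcD D2))) <= dchi (arcD (dprod D1 (drev D2))).
Proof.
apply: (@dchi_hom (dprod (arcD D1) (drev (arcD D2))) (arcD (dprod D1 (drev D2)))
  (@arc_pair_rev D1 D2)).
move=> -[a b] [a' b'] /andP[/eqP /= aa' /eqP /= bb'].
by rewrite /= /arc_rel /= aa' bb'.
Qed.

Lemma bounded_descent (P : nat -> nat -> Prop) :
  (forall n C C', C <= C' -> P n C -> P n C') ->
  (forall C, 4 <= C -> (forall n, P n C.+1) -> forall n, P n C) ->
  forall C, (forall n, P n C) -> forall n, P n 4.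
Proof.
move=> mono step; elim=> [|C IH] PC n; first exact: mono (PC n).
have [le_C4 | lt_4C] := leqP C.+1 4; first exact: mono (PC n).
exact: IH (step C lt_4C PC) n.
Qed.

Lemma g_le_mono n C C' : C <= C' -> g_le n C -> g_le n C'.
Proof.
move=> le_CC' [D1 [D2 [n1 [n2 le_C]]]]; exists D1, D2; do 2!split=> //.
exact: leq_trans le_C le_CC'.
Qed.

Lemma h_le_mono n C C' : C <= C' -> h_le n C -> h_le n C'.
Proof.
move=> le_CC' [D1 [D2 [n1 [n2 le_C]]]]; exists D1, D2; do 2!split=> //.
exact: leq_trans le_C le_CC'.
Qed.

Lemma g_le_step C : 4 <= C -> (forall n, g_le n C.+1) -> forall n, g_le n C.
Proof.
move=> C4 bound n; have [D1 [D2 [n1 [n2 le_prod]]]] := bound (2 ^ n).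
exists (arcD D1), (arcD D2); split; first exact: exp_le_dchi_arcD.
split; first exact: exp_le_dchi_arcD.
exact: leq_trans (dchi_dprod_arcD D1 D2) (dchi_arcD_shrink C4 le_prod).
Qed.

Lemma h_le_step C : 4 <= C -> (forall n, h_le n C.+1) -> forall n, h_le n C.
Proof.
move=> C4 bound n; have [D1 [D2 [n1 [n2]]]] := bound (2 ^ n).
rewrite geq_max => /andP[le_prod le_prod_rev].
exists (arcD D1), (arcD D2); split; first exact: exp_le_dchi_arcD.
split; first exact: exp_le_dchi_arcD.
rewrite geq_max (leq_trans (dchi_dprod_arcD D1 D2) (dchi_arcD_shrink C4 le_prod)).
exact: leq_trans (dchi_dprod_rev_arcD D1 D2) (dchi_arcD_shrink C4 le_prod_rev).
Qed.

Definition digraph_of_graph (G : graph) : digraph :=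
  @Digraph (gvert G) (@gadj G) (@gadj_irr G).

Lemma ugraph_irr (D : digraph) : irreflexive (fun x y => @darc D x y || darc y x).
Proof. by move=> x; rewrite darc_irr. Qed.

Lemma ugraph_sym (D : digraph) : symmetric (fun x y => @darc D x y || darc y x).
Proof. by move=> x y; rewrite orbC. Qed.

Definition ugraph (D : digraph) : graph :=
  @Graph (dvert D) _ (@ugraph_irr D) (@ugraph_sym D).

Lemma gchi_ugraph (D : digraph) : gchi (ugraph D) = dchi D.
Proof.
apply/eqP; rewrite eqn_leq; apply/andP; split; apply: (@uchi_comap _ _ _ _ _ _ id).
  by move=> x y.
by move=> x y xy; rewrite /= xy.
Qed.

Lemma f_le_h_le n C : f_le n C -> h_le n C.
Proof.
move=> [G [H [nG [nH le_prod]]]].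
exists (digraph_of_graph G), (digraph_of_graph H); do 2!split=> //.
have dchi_prod :
    dchi (dprod (digraph_of_graph G) (digraph_of_graph H)) = gchi (gprod G H) by [].
have dchi_prod_rev :
    dchi (dprod (digraph_of_graph G) (drev (digraph_of_graph H))) = gchi (gprod G H).
  apply/eqP; rewrite eqn_leq; apply/andP; split; apply: (@uchi_comap _ _ _ _ _ _ id);
    move=> x y /andP[/= e1 e2]; have e2' := e2; rewrite gadj_sym in e2';
    by rewrite /prod_rel /= e1 e2 e2'.
by rewrite dchi_prod dchi_prod_rev maxnn.
Qed.

(* An edge of [ugraph D1 x ugraph D2] joins its ends in the same direction or
   in opposite directions, i.e. it is an edge of [D1 x D2] or of
   [D1 x D2^-1]; colour a vertex by the pair of its colours there. *)
Lemma gchi_gprod_ugraph (D1 D2 : digraph) :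
  gchi (gprod (ugraph D1) (ugraph D2)) <=
    dchi (dprod D1 D2) * dchi (dprod D1 (drev D2)).
Proof.
rewrite /gchi uchi_leq.
apply: (ucolorable_mul _ (dchi_ucolorable (dprod D1 D2))
                         (dchi_ucolorable (dprod D1 (drev D2)))).
move=> [x1 x2] [y1 y2] /andP[/= /orP[] e1 /orP[] e2];
  by rewrite /prod_rel /= e1 e2 ?orbT.
Qed.

Lemma h_le_f_le n C : h_le n C -> f_le n (C * C).
Proof.
move=> [D1 [D2 [n1 [n2]]]]; rewrite geq_max => /andP[le_prod le_prod_rev].
exists (ugraph D1), (ugraph D2); rewrite !gchi_ugraph; do 2!split=> //.
exact: leq_trans (gchi_gprod_ugraph D1 D2) (leq_mul le_prod le_prod_rev).
Qed.

Theorem theorem10 :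
  ((exists C, forall n, g_le n C) -> forall n, g_le n 4) /\
  ((exists C, forall n, h_le n C) -> forall n, h_le n 4) /\
  ((exists C, forall n, f_le n C) -> forall n, f_le n 16).
Proof.
have g_bound := bounded_descent g_le_mono g_le_step.
have h_bound := bounded_descent h_le_mono h_le_step.
split; first by move=> [C]; apply: g_bound.
split; first by move=> [C]; apply: h_bound.
move=> [C f_bounded] n; apply: (@h_le_f_le n 4).
by apply: (h_bound C) => m; apply: f_le_h_le (f_bounded m).
Qed.
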